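(* Let $\mathcal{P}\subseteq\mathbb{Z}_{\geq0}$ with $0\in\mathcal{P}$, working with formal power series over a commutative ring $R\supseteq\mathbb{Q}$. Then for every $n\ge0$, $$[z^n]\,P^\mathcal{P}(z) = [z^{n}]\,e_\mathcal{P}(z)^n e^z.$$
   Context: $[n]=\{1,\dots,n\}$; $[z^n]g$ is the coefficient of $z^n$. $e_\mathcal{P}(z)=\sum_{n\in\mathcal{P}}z^n/n!$ and $e^z=\sum_{n\ge0}z^n/n!$. $P^\mathcal{P}(z)=\sum_{n\ge0}p_nz^n/n!$, where $p_n$ is the number of partial functions $f$ on $[n]$ (maps from some subset $S\subseteq[n]$ into $[n]$) with $|f^{-1}(x)|\in\mathcal{P}$ for every $x\in[n]$. *)

From mathcomp Require Import all_boot all_order all_algebra.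
Set Implicit Arguments. Unset Strict Implicit. Unset Printing Implicit Defensive.
Import GRing.Theory.
Local Open Scope ring_scope.

Definition fps (R : Type) := nat -> R.

Section FPS.
Variable R : comUnitRingType.

Definition fps_one : fps R := fun n => (n == 0%N)%:R.

Definition fps_mul (f g : fps R) : fps R :=
  fun n => \sum_(i < n.+1) f i * g (n - i)%N.

Definition fps_exp (f : fps R) (k : nat) : fps R := iter k (fps_mul f) fps_one.

Definition e_set (P : pred nat) : fps R :=
  fun n => if P n then (n`!%:R)^-1 else 0.

Definition e_exp : fps R := fun n => (n`!%:R)^-1.
End FPS.

(* p_n : the number of partial functions f on [n] (a map from a subset S of [n]
   into [n], encoded as a total map [n] -> option [n], None meaning "undefined")
   such that |f^{-1}(x)| lies in P for every x in [n]. *)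
Definition p_count (P : pred nat) (n : nat) : nat :=
  #|[set f : {ffun 'I_n -> option 'I_n} |
      [forall x : 'I_n, P #|[set i : 'I_n | f i == Some x]| ]]|.

From mathcomp Require Import all_boot all_order all_algebra.
Import GRing.Theory.
Set Implicit Arguments. Unset Strict Implicit. Unset Printing Implicit Defensive.
Local Open Scope ring_scope.

(* Call a partial map into 'I_k (None meaning undefined) admissible for D if it
   is undefined outside D and all its fibres have sizes in P, and let N_k(D) be
   their number.  Removing the fibre S of the largest value leaves an admissible
   map into 'I_(k-1) for D :\: S, so N_(k+1)(D) is the sum of N_k(D :\: S) over
   the S included in D with |S| in P, and N_0(D) = 1.  Grouping the S by size,
   N_k(D) / |D|! obeys the recurrence c_(k+1) = e_P c_k, c_0 = e^z of the
   coefficients of e_P^k e^z at z^|D|; take D = [n] and k = n. *)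

Section FormalPowerSeries.
Variable R : comUnitRingType.
Implicit Types f g h : fps R.

Definition fps_trunc f n : {poly R} := \poly_(i < n.+1) f i.

Lemma fps_mul_coefM f g m n : (m <= n)%N ->
  fps_mul f g m = (fps_trunc f n * fps_trunc g n)`_m.
Proof.
move=> le_mn; rewrite coefM; apply: eq_bigr => i _.
rewrite !coef_poly (leq_trans (ltn_ord i)) //.
by rewrite ltnS (leq_trans (leq_subr _ _)).
Qed.

Lemma fps_mulA f g h n :
  fps_mul (fps_mul f g) h n = fps_mul f (fps_mul g h) n.
Proof.
have -> : fps_mul (fps_mul f g) h n =
          (fps_trunc f n * fps_trunc g n * fps_trunc h n)`_n.
  rewrite coefM; apply: eq_bigr => i _.
  by rewrite (fps_mul_coefM _ _ (ltnSE (ltn_ord i))) coef_poly ltnS leq_subr.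
have -> : fps_mul f (fps_mul g h) n =
          (fps_trunc f n * (fps_trunc g n * fps_trunc h n))`_n.
  rewrite coefM; apply: eq_bigr => i _.
  by rewrite -(fps_mul_coefM _ _ (leq_subr i n)) coef_poly ltn_ord.
by rewrite mulrA.
Qed.

Lemma fps_mul1 f n : fps_mul (fps_one R) f n = f n.
Proof.
rewrite /fps_mul big_ord_recl subn0 mul1r big1 ?addr0 // => i _.
by rewrite /fps_one /= mul0r.
Qed.

End FormalPowerSeries.

Section PartialMaps.
Variables (T : finType) (P : pred nat).
Implicit Types D S : {set T}.

Definition fibre k (f : {ffun T -> option 'I_k}) (x : 'I_k) : {set T} :=
  [set i | f i == Some x].

Definition admissible (D : {set T}) k (f : {ffun T -> option 'I_k}) : bool :=
  [forall i, (i \notin D) ==> (f i == None)] && [forall x, P #|fibre f x|].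

Definition count_admissible (D : {set T}) k : nat :=
  #|[set f | @admissible D k f]|.

Lemma admissible_notin D k (f : {ffun T -> option 'I_k}) i :
  admissible D f -> i \notin D -> f i = None.
Proof. by case/andP=> /forallP/(_ i) /implyP fD _ /fD /eqP. Qed.

Lemma admissible_setD_None D S k (g : {ffun T -> option 'I_k}) :
  admissible (D :\: S) g -> {in S, forall i, g i = None}.
Proof. by move=> gD i iS; apply: (admissible_notin gD); rewrite inE iS. Qed.

Lemma admissible_fibre D k (f : {ffun T -> option 'I_k}) x :
  admissible D f -> (fibre f x \subset D) && P #|fibre f x|.
Proof.
move=> fD; have [_ /forallP -> ] := andP fD; rewrite andbT.
by apply/subsetP => i; rewrite inE; apply: contraTT => /(admissible_notin fD) ->.
Qed.

Lemma count_admissible0 D : count_admissible D 0 = 1%N.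
Proof.
rewrite /count_admissible.
suff -> : [set f | @admissible D 0 f] = [set [ffun=> None]] by rewrite cards1.
apply/setP => f.
have -> : f = [ffun=> None] by apply/ffunP => i; rewrite ffunE; case: (f i) => [[]|].
rewrite !inE eqxx; apply/andP; split; apply/forallP; last by case.
by move=> i; rewrite ffunE implybT.
Qed.

Definition extend_max k S (g : {ffun T -> option 'I_k}) :
  {ffun T -> option 'I_k.+1} :=
  [ffun i => if i \in S then Some ord_max else omap (lift ord_max) (g i)].

Definition drop_max k (f : {ffun T -> option 'I_k.+1}) : {ffun T -> option 'I_k} :=
  [ffun i => obind (unlift ord_max) (f i)].

Lemma fibre_extend_max k S (g : {ffun T -> option 'I_k}) :
  fibre (extend_max S g) ord_max = S.
Proof.
apply/setP => i; rewrite !inE ffunE; case: (boolP (i \in S)) => _; first exact: eqxx.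
by case: (g i) => //= x; rewrite (inj_eq Some_inj) eq_sym (negbTE (neq_lift _ _)).
Qed.

Lemma fibre_extend_lift k S (g : {ffun T -> option 'I_k}) y :
  {in S, forall i, g i = None} -> fibre (extend_max S g) (lift ord_max y) = fibre g y.
Proof.
move=> gS; apply/setP => i; rewrite !inE ffunE; case: (boolP (i \in S)) => iS.
  by rewrite gS // (inj_eq Some_inj) (negbTE (neq_lift _ _)).
by case: (g i) => //= x; rewrite !(inj_eq Some_inj) (inj_eq (lift_inj (h:=ord_max))).
Qed.

Lemma fibre_drop_max k (f : {ffun T -> option 'I_k.+1}) y :
  fibre (drop_max f) y = fibre f (lift ord_max y).
Proof.
apply/setP => i; rewrite !inE ffunE; case: (f i) => //= x.
case: unliftP => [z ->|->].
  by rewrite !(inj_eq Some_inj) (inj_eq (lift_inj (h:=ord_max))).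
by rewrite (inj_eq Some_inj) (negbTE (neq_lift _ _)).
Qed.

Lemma extend_drop_max k (f : {ffun T -> option 'I_k.+1}) :
  extend_max (fibre f ord_max) (drop_max f) = f.
Proof.
apply/ffunP => i; rewrite !ffunE inE.
case: (f i) => [x|] //=; case: eqP => [-> //|ne_x].
by case: unliftP ne_x => [z -> //|->].
Qed.

Lemma drop_extend_max k S (g : {ffun T -> option 'I_k}) :
  {in S, forall i, g i = None} -> drop_max (extend_max S g) = g.
Proof.
move=> gS; apply/ffunP => i; rewrite !ffunE.
case: (boolP (i \in S)) => iS; first by rewrite /= unlift_none gS.
by case: (g i) => //= x; rewrite liftK.
Qed.

Lemma admissible_extend_max D k S (g : {ffun T -> option 'I_k}) :
  S \subset D -> P #|S| -> admissible (D :\: S) g -> admissible D (extend_max S g).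
Proof.
move=> sSD PS gD; have gS := admissible_setD_None gD.
apply/andP; split; apply/forallP.
  move=> i; apply/implyP => iD; have iS : i \notin S by apply: contra iD; apply/subsetP.
  by rewrite ffunE (negbTE iS) (admissible_notin gD) // inE negb_and iD orbT.
move=> x; case: (unliftP ord_max x) => [y ->|->]; last by rewrite fibre_extend_max.
by rewrite fibre_extend_lift //; have /andP[_ ->] := admissible_fibre y gD.
Qed.

Lemma admissible_drop_max D k (f : {ffun T -> option 'I_k.+1}) :
  admissible D f -> admissible (D :\: fibre f ord_max) (drop_max f).
Proof.
move=> fD; apply/andP; split; apply/forallP; last first.
  move=> y; rewrite fibre_drop_max.
  by have /andP[_ ->] := admissible_fibre (lift ord_max y) fD.
move=> i; apply/implyP; rewrite !inE negb_and negbK ffunE => /orP[/eqP -> | iD].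
  by rewrite /= unlift_none.
by rewrite (admissible_notin fD iD).
Qed.

Lemma count_admissibleS D k :
  count_admissible D k.+1 =
  (\sum_(S : {set T} | (S \subset D) && P #|S|) count_admissible (D :\: S) k)%N.
Proof.
rewrite /count_admissible -sum1_card.
rewrite (partition_big (fun f => fibre f ord_max)
                      (fun S => (S \subset D) && P #|S|)) /=;
  last by move=> f; rewrite inE => /admissible_fibre.
apply: eq_bigr => S /andP[sSD PS]; rewrite sum1dep_card.
have -> : [set f | (f \in [set f | @admissible D k.+1 f]) && (fibre f ord_max == S)] =
          extend_max S @: [set g | admissible (D :\: S) g].
  apply/setP => f; rewrite !inE; apply/andP/imsetP => [[fD /eqP <-]|[g]].
    by exists (drop_max f); rewrite ?inE ?admissible_drop_max ?extend_drop_max.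
  by rewrite inE => gD ->; rewrite admissible_extend_max ?fibre_extend_max.
apply: card_in_imset => g1 g2; rewrite !inE => g1D g2D.
have g1S := admissible_setD_None g1D; have g2S := admissible_setD_None g2D.
by move/(congr1 (@drop_max k)); rewrite !drop_extend_max.
Qed.

End PartialMaps.

Lemma sum_subsets_card (V : nmodType) (T : finType) (D : {set T}) (F : nat -> V) :
  \sum_(S : {set T} | S \subset D) F #|S| = \sum_(j < #|D|.+1) F j *+ 'C(#|D|, j).
Proof.
rewrite (partition_big (fun S : {set T} => inord #|S| : 'I_#|D|.+1) predT) //=.
apply: eq_bigr => j _; rewrite -cards_draws -sumr_const.
have card_small (S : {set T}) : S \subset D -> (#|S| < #|D|.+1)%N.
  by move=> sSD; rewrite ltnS subset_leq_card.
apply: eq_big => [S|S /andP[sSD /eqP <-]]; last by rewrite inordK ?card_small.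
rewrite inE; case: (boolP (S \subset D)) => //= sSD.
by rewrite -val_eqE /= inordK ?card_small.
Qed.

Section Counting.
Variable R : comUnitRingType.
Hypothesis natS_unit : forall k : nat, k.+1%:R \is a @GRing.unit R.
Variable P : pred nat.

Lemma natr_fact_unit m : m`!%:R \is a @GRing.unit R.
Proof. by have := natS_unit m`!.-1; rewrite prednK ?fact_gt0. Qed.

Lemma natr_bin_fact d j : (j <= d)%N ->
  'C(d, j)%:R * (d - j)%N`!%:R = d`!%:R / j`!%:R :> R.
Proof.
move=> le_jd; rewrite -(bin_fact le_jd) !natrM [j`!%:R * _]mulrC mulrA.
by rewrite mulrK ?natr_fact_unit.
Qed.

Definition eP_pow_exp k : fps R := fps_mul (fps_exp (e_set R P) k) (e_exp R).

Lemma eP_pow_exp0 d : eP_pow_exp 0 d = (d`!%:R)^-1.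
Proof. exact: fps_mul1. Qed.

Lemma eP_pow_expS k d :
  eP_pow_exp k.+1 d = \sum_(j < d.+1) e_set R P j * eP_pow_exp k (d - j)%N.
Proof. by rewrite /eP_pow_exp /fps_exp iterS fps_mulA. Qed.

Lemma count_admissibleE (T : finType) (D : {set T}) k :
  (count_admissible P D k)%:R = #|D|`!%:R * eP_pow_exp k #|D| :> R.
Proof.
elim: k D => [|k IHk] D.
  by rewrite count_admissible0 eP_pow_exp0 divrr ?natr_fact_unit.
rewrite count_admissibleS natr_sum big_mkcondr /=.
under eq_bigr => S sSD do rewrite IHk cardsD (setIidPr sSD).
rewrite (sum_subsets_card D
  (fun j => if P j then (#|D| - j)%N`!%:R * eP_pow_exp k (#|D| - j)%N else 0)).
rewrite eP_pow_expS mulr_sumr; apply: eq_bigr => j _; rewrite /e_set.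
case: (P j); last by rewrite mul0rn mul0r mulr0.
by rewrite -mulrnAl -mulr_natl mulrA natr_bin_fact // -ltnS.
Qed.

End Counting.

Lemma p_count_admissible (P : pred nat) n :
  p_count P n = count_admissible P [set: 'I_n] n.
Proof.
apply: eq_card => f; rewrite !inE /admissible.
suff -> : [forall i, (i \notin [set: 'I_n]) ==> (f i == None)] by [].
by apply/forallP => i; rewrite inE.
Qed.

Theorem corollary5p13 (R : comUnitRingType)
    (HQ : forall k : nat, (k.+1)%:R \is a @GRing.unit R)
    (P : pred nat) (P0 : P 0%N) (n : nat) :
  (p_count P n)%:R / (n`!)%:R = fps_mul (fps_exp (e_set R P) n) (e_exp R) n.
Proof.
rewrite p_count_admissible (count_admissibleE HQ) cardsT card_ord.
by rewrite mulrC mulKr ?natr_fact_unit.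
Qed.
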